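(* Let $S$ be a periodic semigroup such that $E(S)\subseteq Z(S)$. Then the map $\pi:S\to E(S)$ is a semigroup homomorphism and the Clifford part $H(S)$ is a subsemigroup of $S$.
   Context: A semigroup $S$ is periodic if for every $x\in S$ some power $x^n$, $n\ge1$, is an idempotent; then the monogenic semigroup $\{x^n:n\in\mathbb N\}$ contains exactly one idempotent, denoted $\pi(x)$, defining $\pi:S\to E(S)$. $E(S)=\{x\in S:xx=x\}$ is the set of idempotents; $Z(S)=\{z\in S:\forall x\in S\ (xz=zx)\}$ is the center. $H(S)=\bigcup_{e\in E(S)}H_e$, where $H_e$ is the maximal subgroup of $S$ containing the idempotent $e$. *)

From Stdlib Require Import Arith.

Section Semigroup.
Variable T : Type.
Variable mul : T -> T -> T.

Definition associative_op : Prop :=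
  forall x y z, mul x (mul y z) = mul (mul x y) z.

(* spow x n = x^(n+1), i.e. positive powers only (n+1 >= 1). *)
Fixpoint spow (x : T) (n : nat) : T :=
  match n with
  | O => x
  | Datatypes.S n' => mul (spow x n') x
  end.

Definition idempotent (e : T) : Prop := mul e e = e.

Definition idempotents_central : Prop :=
  forall e, idempotent e -> forall x, mul x e = mul e x.

Definition periodic : Prop :=
  forall x, exists n, idempotent (spow x n).

(* pi_rel x e : e is the (unique) idempotent of the monogenic subsemigroup
   {x^n : n >= 1}, i.e. e = pi(x). *)
Definition pi_rel (x e : T) : Prop :=
  idempotent e /\ exists n, e = spow x n.

Definition subgroup_with_identity (G : T -> Prop) (e : T) : Prop :=
  G e /\
  (forall g h, G g -> G h -> G (mul g h)) /\
  (forall g, G g -> mul g e = g /\ mul e g = g) /\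
  (forall g, G g -> exists h, G h /\ mul g h = e /\ mul h g = e).

(* H_e: the maximal subgroup containing the idempotent e, i.e. the union of
   all subgroups of S whose identity is e. *)
Definition maxsubgroup (e : T) (x : T) : Prop :=
  exists G, subgroup_with_identity G e /\ G x.

Definition clifford_part (x : T) : Prop :=
  exists e, idempotent e /\ maxsubgroup e x.

End Semigroup.

From Pilot Require Import Defs.
From Stdlib Require Import Arith Lia.

(* Both halves rest on one device.  For an idempotent d let [in_group d]
   be the set of z with dz = z having an inverse relative to d; since d is
   central this is the maximal subgroup H_d.  It is closed under products and
   powers, and d is its only idempotent.  Given x, y with e = pi(x),
   f = pi(y) (resp. x in H_e, y in H_f), put d = ef.  Then dx and dy lie in
   H_d, hence so does (dx)(dy) = d(xy).
   - For pi: d pi(xy) is a power of d(xy), so an idempotent of H_d, hence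
     equals d; conversely pi(xy) is absorbed by e on the left and f on the
     right (it is a power of xy, so it starts with x and ends with y), so
     pi(xy) d = pi(xy).  Thus pi(xy) = d = ef.
   - For H(S): d(xy) = xy because ex = x and fy = y, so xy lies in H_d.
   Periodicity only guarantees that pi is total; the proof uses the
   hypotheses pi_rel directly. *)

Section CentralIdempotents.

Variable T : Type.
Variable mul : T -> T -> T.
Local Infix "**" := mul (at level 40, left associativity).
Local Notation pow := (spow T mul).
Local Notation idempotent := (idempotent T mul).
Local Notation pi_rel := (pi_rel T mul).

Hypothesis assoc : associative_op T mul.

Lemma pow_succ_l x n : x ** pow x n = pow x (Datatypes.S n).
Proof.
  induction n as [|n IH]; simpl; [reflexivity|].
  rewrite assoc. simpl in IH. rewrite IH. reflexivity.
Qed.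

Lemma pow_add x m n : pow x m ** pow x n = pow x (m + n + 1).
Proof.
  induction n as [|n IH].
  - rewrite Nat.add_0_r, Nat.add_1_r. reflexivity.
  - simpl. rewrite assoc, IH.
    replace (m + Datatypes.S n + 1) with (Datatypes.S (m + n + 1)) by lia.
    reflexivity.
Qed.

Lemma pow_left_unit d z n : d ** z = z -> d ** pow z n = pow z n.
Proof.
  intro Hdz. induction n as [|n IH]; simpl; [exact Hdz|].
  rewrite assoc, IH. reflexivity.
Qed.

Lemma pow_factor_l x y k : exists w, pow (x ** y) k = x ** w.
Proof.
  destruct k as [|k]; [exists y; reflexivity|].
  exists (y ** pow (x ** y) k).
  rewrite <- pow_succ_l. symmetry. apply assoc.
Qed.

Lemma pow_factor_r x y k : exists w, pow (x ** y) k = w ** y.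
Proof.
  destruct k as [|k]; [exists x; reflexivity|].
  exists (pow (x ** y) k ** x). simpl. apply assoc.
Qed.

(* z lies in the group with identity d: d is a left identity for z and z has
   an inverse t relative to d.  Under central idempotents this is H_d. *)
Definition in_group (d z : T) : Prop :=
  d ** z = z /\ exists t, d ** t = t /\ z ** t = d /\ t ** z = d.

Lemma in_group_of_power d z m :
  idempotent d -> d ** z = z -> pow z m = d -> in_group d z.
Proof.
  intros Hd Hdz Hm. split; [exact Hdz|].
  assert (Hinv : pow z (Datatypes.S (m + m)) = d).
  { rewrite <- Nat.add_1_r, <- pow_add, Hm. exact Hd. }
  exists (pow z (m + m)). split; [|split].
  - apply pow_left_unit. exact Hdz.
  - rewrite pow_succ_l. exact Hinv.
  - exact Hinv.
Qed.

Lemma idem_product_absorbs_r e f : idempotent f -> e ** f ** f = e ** f.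
Proof. intro Hf. rewrite <- assoc, Hf. reflexivity. Qed.

Hypothesis central : idempotents_central T mul.

Lemma idem_product_absorbs_l e f :
  idempotent e -> idempotent f -> e ** f ** e = e ** f.
Proof.
  intros He Hf. rewrite <- assoc, <- (central f Hf e), assoc, He. reflexivity.
Qed.

Lemma idempotent_mul e f : idempotent e -> idempotent f -> idempotent (e ** f).
Proof.
  intros He Hf. unfold Defs.idempotent.
  rewrite <- assoc, (assoc f e f), <- (central f Hf e), <- assoc, Hf, assoc, He.
  reflexivity.
Qed.

Lemma mul_idem_distr d x y : idempotent d -> d ** (x ** y) = d ** x ** (d ** y).
Proof.
  intro Hd.
  rewrite (assoc (d ** x) d y), <- (assoc d x d), (central d Hd x), (assoc d d x), Hd.
  apply assoc.
Qed.

Lemma pow_mul_idem d x n : idempotent d -> pow (d ** x) n = d ** pow x n.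
Proof.
  intro Hd. induction n as [|n IH]; simpl; [reflexivity|].
  rewrite IH. symmetry. apply mul_idem_distr. exact Hd.
Qed.

Lemma in_group_mul d a b :
  idempotent d -> in_group d a -> in_group d b -> in_group d (a ** b).
Proof.
  intros Hd [Ha [ta [Hta [Hata Htaa]]]] [Hb [tb [Htb [Hbtb Htbb]]]].
  split; [rewrite assoc, Ha; reflexivity|].
  exists (tb ** ta). split; [|split].
  - rewrite assoc, Htb. reflexivity.
  - rewrite <- assoc, (assoc b tb ta), Hbtb, (assoc a d ta), (central d Hd a), Ha.
    exact Hata.
  - rewrite <- assoc, (assoc ta a b), Htaa, (assoc tb d b), (central d Hd tb), Htb.
    exact Htbb.
Qed.

Lemma in_group_pow d a n : idempotent d -> in_group d a -> in_group d (pow a n).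
Proof.
  intros Hd Ha. induction n as [|n IH]; simpl; [exact Ha|].
  apply in_group_mul; assumption.
Qed.

Lemma in_group_idempotent d w : idempotent d -> in_group d w -> idempotent w -> w = d.
Proof.
  intros Hd [Hw [t [_ [Hwt _]]]] Hww.
  assert (H : w ** w ** t = w ** t) by (rewrite Hww; reflexivity).
  rewrite <- assoc, Hwt, (central d Hd w), Hw in H. exact H.
Qed.

Lemma in_group_subgroup d : idempotent d -> subgroup_with_identity T mul (in_group d) d.
Proof.
  intro Hd. split; [|split; [|split]].
  - split; [exact Hd|]. exists d. auto.
  - intros; apply in_group_mul; assumption.
  - intros z [Hz _]. rewrite (central d Hd z). auto.
  - intros z [Hz [t [Ht [Hzt Htz]]]]. exists t. split; [|auto].
    split; [exact Ht|]. exists z. auto.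
Qed.

Lemma in_group_of_pi d x e :
  idempotent d -> pi_rel x e -> d ** e = d -> in_group d (d ** x).
Proof.
  intros Hd [_ [n Hn]] Hde. apply (in_group_of_power d (d ** x) n Hd).
  - rewrite assoc, Hd. reflexivity.
  - rewrite pow_mul_idem, <- Hn by exact Hd. exact Hde.
Qed.

Lemma in_group_of_subgroup d e G x :
  idempotent d -> subgroup_with_identity T mul G e -> G x -> d ** e = d ->
  in_group d (d ** x).
Proof.
  intros Hd [_ [_ [_ Hinv]]] Hx Hde. destruct (Hinv x Hx) as [h [_ [Hxh Hhx]]].
  split; [rewrite assoc, Hd; reflexivity|].
  exists (d ** h). split; [|split].
  - rewrite assoc, Hd. reflexivity.
  - rewrite <- mul_idem_distr, Hxh by exact Hd. exact Hde.
  - rewrite <- mul_idem_distr, Hhx by exact Hd. exact Hde.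
Qed.

Lemma idempotent_pow_split g a b n :
  idempotent g -> g = a ** b -> g = pow a n ** pow b n.
Proof.
  intros Hg Hab. induction n as [|n IH]; [exact Hab|].
  rewrite <- Hg at 1. rewrite IH at 1.
  rewrite <- assoc, (central g Hg), Hab, <- (assoc a b), (assoc (pow a n) a).
  rewrite pow_succ_l. reflexivity.
Qed.

Lemma pi_absorbs_l g x w e : idempotent g -> g = x ** w -> pi_rel x e -> e ** g = g.
Proof.
  intros Hg Hxw [He [n Hn]].
  pose proof (idempotent_pow_split g x w n Hg Hxw) as Hs.
  rewrite <- Hn in Hs. rewrite Hs, assoc, He. reflexivity.
Qed.

Lemma pi_absorbs_r g w y f : idempotent g -> g = w ** y -> pi_rel y f -> g ** f = g.
Proof.
  intros Hg Hwy [Hf [m Hm]].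
  pose proof (idempotent_pow_split g w y m Hg Hwy) as Hs.
  rewrite <- Hm in Hs. rewrite Hs, <- assoc, Hf. reflexivity.
Qed.

Lemma pi_mul x y e f g : pi_rel x e -> pi_rel y f -> pi_rel (x ** y) g -> g = e ** f.
Proof.
  intros Hxe Hyf Hxyg.
  pose proof Hxe as [He _]. pose proof Hyf as [Hf _]. pose proof Hxyg as [Hg [k Hk]].
  set (d := e ** f).
  assert (Hd : idempotent d) by (apply idempotent_mul; assumption).
  assert (Hdg : d ** g = d).
  { apply in_group_idempotent; [exact Hd| |apply idempotent_mul; assumption].
    rewrite Hk, <- pow_mul_idem by exact Hd.
    apply in_group_pow; [exact Hd|].
    rewrite mul_idem_distr by exact Hd.
    apply in_group_mul; [exact Hd| |].
    - apply (in_group_of_pi d x e Hd Hxe), idem_product_absorbs_l; assumption.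
    - apply (in_group_of_pi d y f Hd Hyf), idem_product_absorbs_r; assumption. }
  assert (Hgd : g ** d = g).
  { destruct (pow_factor_l x y k) as [w Hw]. destruct (pow_factor_r x y k) as [w' Hw'].
    rewrite <- Hk in Hw, Hw'.
    unfold d. rewrite assoc, (central e He g).
    rewrite (pi_absorbs_l g x w e), (pi_absorbs_r g w' y f); auto. }
  rewrite <- Hgd, (central d Hd). exact Hdg.
Qed.

Lemma clifford_part_mul x y :
  clifford_part T mul x -> clifford_part T mul y -> clifford_part T mul (x ** y).
Proof.
  intros [e [He [G [HG Hx]]]] [f [Hf [G' [HG' Hy]]]].
  set (d := e ** f).
  assert (Hd : idempotent d) by (apply idempotent_mul; assumption).
  assert (Hdxy : d ** (x ** y) = x ** y).
  { destruct HG as [_ [_ [Hid _]]]. destruct HG' as [_ [_ [Hid' _]]].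
    destruct (Hid x Hx) as [Hxe _]. destruct (Hid' y Hy) as [_ Hfy].
    unfold d. rewrite <- assoc, (assoc f x y), <- (central f Hf x), <- (assoc x f y), Hfy.
    rewrite assoc, <- (central e He x), Hxe. reflexivity. }
  exists d. split; [exact Hd|]. exists (in_group d). split; [exact (in_group_subgroup d Hd)|].
  rewrite <- Hdxy, mul_idem_distr by exact Hd.
  apply in_group_mul; [exact Hd| |].
  - apply (in_group_of_subgroup d e G x Hd HG Hx), idem_product_absorbs_l; assumption.
  - apply (in_group_of_subgroup d f G' y Hd HG' Hy), idem_product_absorbs_r; assumption.
Qed.

End CentralIdempotents.

Theorem proposition3p2 (S : Type) (mul : S -> S -> S)
  (Hassoc : associative_op S mul)
  (Hper : periodic S mul)
  (Hcent : idempotents_central S mul) :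
  (* pi is a homomorphism: pi(xy) = pi(x) pi(y) *)
  (forall x y e f g,
      pi_rel S mul x e -> pi_rel S mul y f -> pi_rel S mul (mul x y) g ->
      g = mul e f) /\
  (* H(S) is a subsemigroup of S *)
  (forall x y, clifford_part S mul x -> clifford_part S mul y ->
      clifford_part S mul (mul x y)).
Proof.
  split.
  - exact (pi_mul S mul Hassoc Hcent).
  - exact (clifford_part_mul S mul Hassoc Hcent).
Qed.
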